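(* Let $G$ be a 0-1 strongly EFX-orientable graph. Then for every matching $M$ in $G$, the subgraph of $G$ induced by the set of vertices covered by $M$ contains an independent set of size $|M|$.
   Context: All graphs are finite and simple. For a graph $G=(V,E)$ and $v\in V$, $E(v)$ is the set of edges incident to $v$. A graphical instance on $G$ assigns to each vertex $v$ a valuation $f_v:2^E\to\mathbb{R}_{\ge 0}$ that is monotone and satisfies $f_v(X)=f_v(X\cap E(v))$ for all $X\subseteq E$. An orientation of $G$ chooses for each edge one of its endpoints as its head; vertex $v$ receives the bundle $X_v$ of edges whose head is $v$. The orientation is EFX if for all $u,v\in V$ and every $g\in X_v$, $f_u(X_u)\ge f_u(X_v\setminus\{g\})$. A graph $G$ is 0-1 strongly EFX-orientable if for every graphical instance on $G$ in which each $f_v$ is additive with $f_v(\{e\})\in\{0,1\}$ for all edges $e$, there exists an EFX orientation. *)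

From mathcomp Require Import all_boot.
Set Implicit Arguments. Unset Strict Implicit. Unset Printing Implicit Defensive.

Section Graphs.
Variable T : finType.

Definition simple_graph (adj : rel T) : Prop :=
  symmetric adj /\ irreflexive adj.

Definition edges (adj : rel T) : {set {set T}} :=
  [set a : {set T} | [exists x : T, exists y : T, adj x y && (a == [set x; y])]].

Definition orientation (adj : rel T) (head : {set T} -> T) : Prop :=
  forall a, a \in edges adj -> head a \in a.

Definition bundle (adj : rel T) (head : {set T} -> T) (v : T) : {set {set T}} :=
  [set a in edges adj | head a == v].

(* A 0-1 additive graphical valuation: w u a in {0,1} is f_u({a}) for an
   edge a incident to u; f_u(X) = sum of w u a over edges of X incident to u
   (so f_u(X) = f_u(X ∩ E(u)), and f_u is additive, hence monotone). *)
Definition val01 (w : T -> {set T} -> bool) (u : T) (X : {set {set T}}) : nat :=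
  \sum_(a in X | u \in a) w u a.

Definition EFX (adj : rel T) (w : T -> {set T} -> bool) (head : {set T} -> T) : Prop :=
  forall u v g, g \in bundle adj head v ->
    val01 w u (bundle adj head v :\ g) <= val01 w u (bundle adj head u).

Definition strongly_EFX_orientable_01 (adj : rel T) : Prop :=
  forall w : T -> {set T} -> bool,
    exists head, orientation adj head /\ EFX adj w head.

Definition matching (adj : rel T) (M : {set {set T}}) : Prop :=
  M \subset edges adj /\
  {in M &, forall a b : {set T}, a != b -> [disjoint a & b]}.

Definition covered (M : {set {set T}}) : {set T} := \bigcup_(a in M) a.

Definition independent (adj : rel T) (S : {set T}) : Prop :=
  {in S &, forall x y : T, ~~ adj x y}.

End Graphs.

(* Give every vertex value 1 for the matching edges it lies on and 0 for all
   other edges, and fix an EFX orientation.  If a matching edge e points to h,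
   its other endpoint u values nothing in its own bundle, so by EFX the bundle
   of h minus any edge is worthless to u; hence that bundle is exactly {e}.
   The heads of the matching edges are then pairwise non-adjacent: an edge
   between two heads would lie in one of these singleton bundles.  They are
   distinct because the matching edges are disjoint. *)
From mathcomp Require Import all_boot.

Set Implicit Arguments.
Unset Strict Implicit.
Unset Printing Implicit Defensive.

Section SimpleGraph.
Variables (T : finType) (adj : rel T).
Hypothesis adj_simple : simple_graph adj.

Lemma edges_set2 x y : adj x y -> [set x; y] \in edges adj.
Proof.
by move=> axy; rewrite inE; apply/existsP; exists x; apply/existsP; exists y; rewrite axy eqxx.
Qed.

Lemma edge_other_endpoint a h : a \in edges adj -> exists2 u, u \in a & u != h.
Proof.
rewrite inE => /existsP[x /existsP[y /andP[axy /eqP ->]]].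
have nxy : x != y by apply: contraTneq axy => ->; rewrite adj_simple.2.
case: (eqVneq x h) => [exh|nxh]; last by exists x; rewrite ?set21.
by exists y; rewrite ?set22 // -exh eq_sym.
Qed.

Variable M : {set {set T}}.
Hypothesis M_matching : matching adj M.

Lemma matching_edge a : a \in M -> a \in edges adj.
Proof. exact: subsetP M_matching.1 a. Qed.

Lemma matching_eq a b u : a \in M -> b \in M -> u \in a -> u \in b -> a = b.
Proof.
move=> aM bM ua ub; apply/eqP; apply: contraTT isT => nab.
by have := disjointFr (M_matching.2 a b aM bM nab) ua; rewrite ub.
Qed.

Let wM (u : T) (a : {set T}) := a \in M.

Variable head : {set T} -> T.
Hypothesis head_orientation : orientation adj head.
Hypothesis head_EFX : EFX adj wM head.

Lemma head_matching e : e \in M -> head e \in e.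
Proof. by move=> eM; apply/head_orientation/matching_edge. Qed.

Lemma val01_bundle_tail e u :
  e \in M -> u \in e -> u != head e -> val01 wM u (bundle adj head u) = 0.
Proof.
move=> eM ue uh; apply: big1 => a /andP[]; rewrite inE => /andP[_ /eqP hau] ua.
suff : ~~ wM u a by case: (wM u a).
by apply: contra uh => aM; rewrite -hau (matching_eq aM eM ua ue).
Qed.

Lemma bundle_head_matching e g :
  e \in M -> g \in bundle adj head (head e) -> g = e.
Proof.
move=> eM gb; apply/eqP; apply: contraTT isT => nge.
have [u ue uh] := edge_other_endpoint (head e) (matching_edge eM).
have := head_EFX u gb; rewrite (val01_bundle_tail eM ue uh) leqn0.
have eb : e \in bundle adj head (head e) :\ g.
  by rewrite in_setD1 eq_sym nge /bundle in_set (matching_edge eM) eqxx.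
by rewrite /val01 (bigD1 e) /= ?eb ?ue // /wM eM.
Qed.

Lemma no_edge_from_head e f :
  e \in M -> f \in M -> adj (head e) (head f) ->
  head [set head e; head f] != head e.
Proof.
move=> eM fM aef; apply/eqP => hd.
have ef : [set head e; head f] = e.
  by apply: bundle_head_matching; rewrite // inE edges_set2 //= hd.
have fe : f = e by apply: (matching_eq fM eM (head_matching fM)); rewrite -ef set22.
by move: aef; rewrite fe adj_simple.2.
Qed.

Lemma heads_independent : independent adj (head @: M).
Proof.
move=> _ _ /imsetP[e eM ->] /imsetP[f fM ->]; apply/negP => aef.
have := head_orientation (edges_set2 aef); rewrite !inE => /orP[] /eqP hd.
- by move: (no_edge_from_head eM fM aef); rewrite hd eqxx.
- have afe : adj (head f) (head e) by rewrite adj_simple.1.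
  by move: (no_edge_from_head fM eM afe); rewrite setUC hd eqxx.
Qed.

Lemma heads_covered : head @: M \subset covered M.
Proof.
by apply/subsetP => _ /imsetP[e eM ->]; apply/bigcupP; exists e; rewrite ?head_matching.
Qed.

Lemma card_heads : #|head @: M| = #|M|.
Proof.
apply: card_in_imset => e f eM fM hef.
by apply: (matching_eq eM fM (head_matching eM)); rewrite hef head_matching.
Qed.

End SimpleGraph.

Theorem mainTheorem2 (T : finType) (adj : rel T) :
  simple_graph adj ->
  strongly_EFX_orientable_01 adj ->
  forall M : {set {set T}}, matching adj M ->
  exists S : {set T},
    [/\ S \subset covered M, independent adj S & #|S| = #|M|].
Proof.
move=> adj_simple adj_EFX M M_matching.
have [head [head_orientation head_EFX]] := adj_EFX (fun _ a => a \in M).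
exists (head @: M); split.
- exact (heads_covered M_matching head_orientation).
- exact (heads_independent adj_simple M_matching head_orientation head_EFX).
- exact (card_heads M_matching head_orientation).
Qed.
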